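(* If $G$ is a finitely generated group of exponential growth, then $\mathrm{WP}_G\notin\mathrm{DTIME}_1(o(n^2))$.
   Context: $\mathrm{WP}_G$ is the word problem $\{w\in S^{*}: w=_G e\}$ for a finite symmetric generating set $S$. $\mathrm{DTIME}_1(o(n^2))$ is the class of languages decided by a deterministic single-tape Turing machine in time $o(n^2)$. $G$ has exponential growth if its growth function $\gamma(n)=\#\{g: l_S(g)\le n\}$ satisfies $\gamma(n)\ge a^n$ for some $a>1$ and all $n$. *)

From mathcomp Require Import all_boot.
From mathcomp Require Import monoid.
From Stdlib Require Import Reals.

Set Implicit Arguments.
Unset Strict Implicit.
Unset Printing Implicit Defensive.

Local Open Scope group_scope.

Section Words.
Variables (G : groupType) (Sigma : finType) (ev : Sigma -> G).

Definition word_eval (w : seq Sigma) : G := foldr (fun s g => ev s * g) 1 w.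

Definition symmetric_gen : Prop := forall s : Sigma, exists s' : Sigma, ev s' = (ev s)^-1.
Definition generating : Prop := forall g : G, exists w : seq Sigma, word_eval w = g.
Definition finite_symmetric_generating_set : Prop :=
  injective ev /\ symmetric_gen /\ generating.

Fixpoint words_of_length (k : nat) : seq (seq Sigma) :=
  match k with
  | 0 => [:: [::]]
  | k'.+1 => [seq x :: w | x <- enum Sigma, w <- words_of_length k']
  end.
Definition words_upto (n : nat) : seq (seq Sigma) :=
  flatten [seq words_of_length k | k <- iota 0 n.+1].

Definition growth (n : nat) : nat := size (undup [seq word_eval w | w <- words_upto n]).

Definition exponential_growth : Prop :=
  exists a : R, (1 < a)%R /\ forall n : nat, (a ^ n <= INR (growth n))%R.

Definition word_problem : pred (seq Sigma) := fun w => word_eval w == 1.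
End Words.

(* Deterministic single-tape Turing machines (two-way infinite tape).  *)

Inductive move := MoveL | MoveR | MoveN.

Record TM (Sigma : finType) := {
  tm_state : finType;
  tm_tape : finType;
  tm_inp : Sigma -> tm_tape;
  tm_blank : tm_tape;
  tm_start : tm_state;
  tm_acc : tm_state;
  tm_rej : tm_state;
  tm_delta : tm_state -> tm_tape -> tm_state * tm_tape * move
}.
Arguments tm_inp {Sigma} t _.
Arguments tm_blank {Sigma} t.
Arguments tm_start {Sigma} t.
Arguments tm_acc {Sigma} t.
Arguments tm_rej {Sigma} t.
Arguments tm_delta {Sigma} t _ _.

Definition TM_wf (Sigma : finType) (M : TM Sigma) : Prop :=
  injective (tm_inp M) /\ (forall s, tm_inp M s != tm_blank M) /\ tm_acc M != tm_rej M.

Section TMsem.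
Variables (Sigma : finType) (M : TM Sigma).

(* configuration: state, left part of the tape (nearest cell first),
   scanned symbol, right part of the tape (nearest cell first);
   cells outside the lists are blank *)
Definition config : Type :=
  (tm_state M * seq (tm_tape M) * tm_tape M * seq (tm_tape M))%type.

Definition halting (q : tm_state M) : bool := (q == tm_acc M) || (q == tm_rej M).

Definition step (c : config) : config :=
  let: (q, l, a, r) := c in
  if halting q then c else
  let: (q', b, m) := tm_delta M q a in
  match m with
  | MoveL => (q', behead l, head (tm_blank M) l, b :: r)
  | MoveR => (q', b :: l, head (tm_blank M) r, behead r)
  | MoveN => (q', l, b, r)
  end.

Definition init_config (w : seq Sigma) : config :=
  let t := map (tm_inp M) w in
  (tm_start M, [::], head (tm_blank M) t, behead t).

Definition run (t : nat) (w : seq Sigma) : config := iter t step (init_config w).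

Definition config_state (c : config) : tm_state M := let: (q, _, _, _) := c in q.

Definition decides_in_time (L : pred (seq Sigma)) (T : nat -> nat) : Prop :=
  forall w : seq Sigma,
    config_state (run (T (size w)) w) = if L w then tm_acc M else tm_rej M.
End TMsem.

Definition little_o_n2 (T : nat -> nat) : Prop :=
  forall k : nat, exists N : nat, forall n : nat, N <= n -> k * T n <= n ^ 2.

Definition DTIME1_o_n2 (Sigma : finType) (L : pred (seq Sigma)) : Prop :=
  exists M : TM Sigma, TM_wf M /\
    exists T : nat -> nat, little_o_n2 T /\ decides_in_time M L T.

From mathcomp Require Import all_boot.
From mathcomp Require Import monoid zify.
From Stdlib Require Import Reals ZArith Lia Lra FunctionalExtensionality.

(* Crossing sequences (Hennie's argument).  Record, for a single-tape machine, the states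
   in which the head crosses a fixed boundary between two cells.  If two accepted inputs x
   and y produce the same crossing sequence at boundaries b and b', the machine also accepts
   take b x ++ drop b' y, on each side of the cut behaving as on x, resp. y.
   For g in the ball of radius n, the loop word u_g (s s^-1)^n u_g^-1 is a relation, while
   u_g (s s^-1)^n u_g'^-1 is not when g <> g'; so at each of the 2n boundaries inside the
   padding, distinct elements of the ball have distinct crossing sequences.  With
   K = #states + 1 there are at most K^L sequences of length at most L, and exponential
   growth gives a radius n = r L whose ball has at least 2 K^L elements.  Hence the running
   times on the loop words add up to at least n (L + 1) #ball, whereas a time bound o(n^2)
   on words of length at most 4n bounds their sum by n^2 #ball / r = n L #ball. *)

Set Implicit Arguments.
Unset Strict Implicit.
Unset Printing Implicit Defensive.

Section ZTape.
Variables (Sigma : finType) (M : TM Sigma).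
Local Notation state := (tm_state M).
Local Notation symbol := (tm_tape M).
Local Notation blank := (tm_blank M).

(* Unlike [config M], which stores the tape relative to the head, a [zconf] places the
   head at an absolute cell, so that a fixed boundary between cells can be observed. *)
Record zconf := ZConf { zstate : state; zhead : Z; ztape : Z -> symbol }.

Definition head_shift (m : move) : Z :=
  match m with MoveL => -1 | MoveR => 1 | MoveN => 0 end.

Definition tape_write (f : Z -> symbol) (h : Z) (b : symbol) : Z -> symbol :=
  fun p => if (p =? h)%Z then b else f p.

Definition zstep (c : zconf) : zconf :=
  if halting (zstate c) then c else
  let: (q, b, m) := tm_delta M (zstate c) (ztape c (zhead c)) in
  ZConf q (zhead c + head_shift m) (tape_write (ztape c) (zhead c) b).

(* [l] lists the cells left of [h], nearest first; [r] starts with the scanned cell. *)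
Definition tape_of (l r : seq symbol) (h p : Z) : symbol :=
  if (p <? h)%Z then nth blank l (Z.to_nat (h - p - 1))
  else nth blank r (Z.to_nat (p - h)).

Definition zconf_of (c : config M) (h : Z) : zconf :=
  let: (q, l, a, r) := c in ZConf q h (tape_of l (a :: r) h).

Lemma tape_of_shiftL l r h :
  tape_of l r h = tape_of (behead l) (head blank l :: r) (h - 1).
Proof.
apply: functional_extensionality => p; rewrite /tape_of.
case: (Z.ltb_spec p (h - 1)) => Hp.
  rewrite (_ : (p <? h)%Z = true); last by apply/Z.ltb_lt; lia.
  by rewrite nth_behead (_ : Z.to_nat (h - p - 1) = (Z.to_nat (h - 1 - p - 1)).+1) //; lia.
case: (Z.ltb_spec p h) => Hp'.
  have -> : Z.to_nat (h - p - 1) = 0 by lia.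
  by have -> : Z.to_nat (p - (h - 1)) = 0 by lia.
by rewrite (_ : Z.to_nat (p - (h - 1)) = (Z.to_nat (p - h)).+1) //; lia.
Qed.

Lemma tape_of_shiftR l a r h :
  tape_of l (a :: r) h = tape_of (a :: l) (head blank r :: behead r) (h + 1).
Proof.
rewrite [RHS]tape_of_shiftL /= (_ : (h + 1 - 1 = h)%Z); last lia.
case: r => [|x r] //; apply: functional_extensionality => p; rewrite /tape_of.
by case: (p <? h)%Z => //; case: (Z.to_nat _) => [|[|n]] //=; rewrite !nth_nil.
Qed.

Lemma tape_write_of l a r h b :
  tape_write (tape_of l (a :: r) h) h b = tape_of l (b :: r) h.
Proof.
apply: functional_extensionality => p; rewrite /tape_write /tape_of.
case: (Z.eqb_spec p h) => [->|Hp]; first by rewrite Z.ltb_irrefl Z.sub_diag.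
case: (Z.ltb_spec p h) => // Hp'.
by rewrite (_ : Z.to_nat (p - h) = (Z.to_nat (p - h - 1)).+1) //; lia.
Qed.

Lemma zstep_zconf_of c h : exists h', zstep (zconf_of c h) = zconf_of (step c) h'.
Proof.
case: c => [[[q l] a] r]; rewrite /zstep /step /=.
case: (halting q); first by exists h.
have -> : tape_of l (a :: r) h h = a by rewrite /tape_of Z.ltb_irrefl Z.sub_diag.
case: (tm_delta M q a) => [[q' b] []] /=; rewrite tape_write_of.
- by exists (h - 1)%Z; rewrite -tape_of_shiftL.
- by exists (h + 1)%Z; rewrite -tape_of_shiftR.
- by exists h; rewrite Z.add_0_r.
Qed.

Definition zinit (w : seq Sigma) : zconf := zconf_of (init_config M w) 0.
Definition zrun (t : nat) (w : seq Sigma) : zconf := ssrnat.iter t zstep (zinit w).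

Lemma zrunS t w : zrun t.+1 w = zstep (zrun t w).
Proof. exact: iterS. Qed.

Lemma zrun_state t w : zstate (zrun t w) = config_state (run M t w).
Proof.
suff [h ->] : exists h, zrun t w = zconf_of (run M t w) h.
  by case: (run M t w) => [[[q l] a] r].
elim: t => [|t [h IH]]; first by exists 0%Z.
have [h' E] := zstep_zconf_of (run M t w) h.
by exists h'; rewrite zrunS IH E /run iterS.
Qed.

Lemma zhead_zinit w : zhead (zinit w) = 0%Z.
Proof. by []. Qed.

Lemma ztape_zinit w p :
  ztape (zinit w) p =
  if (p <? 0)%Z then blank else nth blank (map (tm_inp M) w) (Z.to_nat p).
Proof.
rewrite /zinit /init_config /= /tape_of Z.sub_0_r; case: (p <? 0)%Z; first exact: nth_nil.
by case: (map _ w) => [|x s] //; case: (Z.to_nat p) => [|[|n]] //=; rewrite nth_nil.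
Qed.

Lemma zstep_halting c : halting (zstate c) -> zstep c = c.
Proof. by rewrite /zstep => ->. Qed.

Lemma zstep_head c : (Z.abs (zhead (zstep c) - zhead c) <= 1)%Z.
Proof.
rewrite /zstep; case: (halting _); first lia.
by case: (tm_delta _ _ _) => [[q b] []] /=; lia.
Qed.

Lemma zstep_tape c p : p <> zhead c -> ztape (zstep c) p = ztape c p.
Proof.
rewrite /zstep; case: (halting _) => // Hp.
case: (tm_delta _ _ _) => [[q b] m] /=; rewrite /tape_write.
by case: (Z.eqb_spec p (zhead c)).
Qed.

Lemma zrun_halted t k w : halting (zstate (zrun t w)) -> zrun (t + k) w = zrun t w.
Proof.
by move=> Ht; elim: k => [|k IH]; rewrite ?addn0 // addnS zrunS IH zstep_halting.
Qed.

Lemma zrun_halting_state t1 t2 w :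
  halting (zstate (zrun t1 w)) -> halting (zstate (zrun t2 w)) ->
  zstate (zrun t1 w) = zstate (zrun t2 w).
Proof.
wlog le12 : t1 t2 / t1 <= t2.
  move=> hwlog H1 H2; case: (leqP t1 t2) => [le12|/ltnW le21]; first exact: hwlog.
  by symmetry; apply: hwlog.
by move=> H1 _; rewrite -(subnKC le12) zrun_halted.
Qed.

(* The boundary [b] separates cells [b - 1] and [b]; side [true] is the left one. *)
Definition on_side (s : bool) (b p : Z) : bool := (p <? b)%Z == s.

Lemma on_sideN s b p : on_side (~~ s) b p = ~~ on_side s b p.
Proof. by rewrite /on_side; case: s; case: (p <? b)%Z. Qed.

Lemma on_side_shift s b d p : on_side s (b + d) (p + d) = on_side s b p.
Proof.
rewrite /on_side; congr (_ == _).
by case: (Z.ltb_spec (p + d) (b + d)); case: (Z.ltb_spec p b) => //; lia.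
Qed.

Lemma crossed_head s b h h' :
  on_side s b h -> ~~ on_side s b h' -> (Z.abs (h' - h) <= 1)%Z ->
  h' = (if s then b else b - 1)%Z.
Proof. by rewrite /on_side; case: s; case: Z.ltb_spec; case: Z.ltb_spec => //=; lia. Qed.

Definition crosses w b t : bool :=
  (zhead (zrun t w) <? b)%Z != (zhead (zrun t.+1 w) <? b)%Z.

Lemma crossesE s w b t :
  crosses w b t = (on_side s b (zhead (zrun t w)) != on_side s b (zhead (zrun t.+1 w))).
Proof. by rewrite /crosses /on_side; case: s; do 2!case: (_ <? b)%Z. Qed.

Lemma crosses_unique w b b' t : crosses w b t -> crosses w b' t -> b = b'.
Proof.
rewrite /crosses zrunS; have := zstep_head (c := zrun t w).
by do 4!case: Z.ltb_spec => //=; lia.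
Qed.

Definition crossing_seq w b T : seq state :=
  [seq zstate (zrun t.+1 w) | t <- iota 0 T & crosses w b t].

Lemma crossing_seqS w b T :
  crossing_seq w b T.+1 =
  crossing_seq w b T ++ (if crosses w b T then [:: zstate (zrun T.+1 w)] else [::]).
Proof.
rewrite /crossing_seq -{1}addn1 iotaD add0n filter_cat map_cat.
by rewrite /=; case: (crosses w b T).
Qed.

Lemma size_crossing_seq w b T :
  size (crossing_seq w b T) = \sum_(t <- iota 0 T) crosses w b t.
Proof. by rewrite size_map size_filter -sum1_count big_mkcond. Qed.

Lemma prefix_crossing_seq w b T1 T2 :
  T1 <= T2 -> prefix (crossing_seq w b T1) (crossing_seq w b T2).
Proof.
move=> /subnKC <-; elim: (T2 - T1) => [|k IH]; first by rewrite addn0 prefix_refl.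
by rewrite addnS crossing_seqS (prefix_trans IH (prefix_prefix _ _)).
Qed.

Lemma ztape_frozen w s b t0 t1 :
  t0 <= t1 -> (forall t, t0 <= t < t1 -> on_side s b (zhead (zrun t w))) ->
  forall p, ~~ on_side s b p -> ztape (zrun t1 w) p = ztape (zrun t0 w) p.
Proof.
move=> le01 Hside p Hp; elim: t1 le01 Hside => [|t1 IH]; first by rewrite leqn0 => /eqP ->.
rewrite leq_eqVlt ltnS => /predU1P [-> //|le01] Hside.
rewrite zrunS zstep_tape; last by move=> E; move: Hp; rewrite E Hside // le01 ltnSn.
by apply: IH => // t /andP [Ht0 Ht1]; apply: Hside; rewrite Ht0 ltnS ltnW.
Qed.

Lemma crossing_free_run w s b t0 t1 :
  t0 <= t1 -> on_side s b (zhead (zrun t0 w)) ->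
  (forall t, t0 <= t < t1 -> ~~ crosses w b t) ->
  crossing_seq w b t1 = crossing_seq w b t0 /\
  forall t, t0 <= t <= t1 -> on_side s b (zhead (zrun t w)).
Proof.
move=> le01 Hs0; elim: t1 le01 => [|t1 IH].
  by rewrite leqn0 => /eqP <- _; split => // t; rewrite -eqn_leq => /eqP <-.
rewrite leq_eqVlt ltnS => /predU1P [<- _|le01 Hfree].
  by split => // t; rewrite -eqn_leq => /eqP <-.
have [IHcs IHside] : crossing_seq w b t1 = crossing_seq w b t0 /\
    forall t, t0 <= t <= t1 -> on_side s b (zhead (zrun t w)).
  by apply: IH => // t /andP [Ht0 Ht1]; apply: Hfree; rewrite Ht0 ltnS ltnW.
have Hfree1 : ~~ crosses w b t1 by apply: Hfree; rewrite le01 ltnSn.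
split; first by rewrite crossing_seqS (negbTE Hfree1) cats0.
move=> t /andP [Ht0]; rewrite leq_eqVlt ltnS => /predU1P [->|Ht1]; last first.
  by apply: IHside; rewrite Ht0.
have Hs1 : on_side s b (zhead (zrun t1 w)) by apply: IHside; rewrite le01 leqnn.
by move: Hfree1; rewrite (crossesE s) Hs1 negbK => /eqP <-.
Qed.

Lemma next_crossing w s b t0 T :
  on_side s b (zhead (zrun t0 w)) ->
  size (crossing_seq w b t0) < size (crossing_seq w b T) ->
  exists e, [/\ t0 <= e < T, crossing_seq w b e = crossing_seq w b t0, crosses w b e &
            forall t, t0 <= t <= e -> on_side s b (zhead (zrun t w))].
Proof.
move=> Hs0 Hsize.
have le0T : t0 <= T.
  rewrite leqNgt; apply/negP => /ltnW /(prefix_crossing_seq w b) /prefixP [s' E].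
  by move: Hsize; rewrite E size_cat ltnNge leq_addr.
have [e [/andP [le0e Hcross] leT min_e]] : exists e,
    [/\ (t0 <= e) && crosses w b e, e < T & forall t, (t0 <= t) && crosses w b t -> e <= t].
  case: (boolP [exists t : 'I_T, (t0 <= t) && crosses w b t]) => [/existsP [t Ht]|/existsPn Hnone].
    have exP : exists t, (t0 <= t) && crosses w b t by exists t.
    case: (ex_minnP exP) => e He min_e; exists e; split => //.
    exact: leq_ltn_trans (min_e _ Ht) (ltn_ord t).
  have Hfree : forall t, t0 <= t < T -> ~~ crosses w b t.
    move=> t /andP [Ht0 HtT]; apply: contraNN (Hnone (Ordinal HtT)) => Hc.
    exact/andP.
  have [Hcs _] := crossing_free_run le0T Hs0 Hfree.
  by move: Hsize; rewrite Hcs ltnn.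
have Hfree : forall t, t0 <= t < e -> ~~ crosses w b t.
  move=> t /andP [Ht0 Hte]; apply/negP => Hc.
  by move: (min_e t); rewrite Ht0 Hc leqNgt Hte => /(_ isT).
have [Hcs Hside] := crossing_free_run le0e Hs0 Hfree.
by exists e; split; rewrite ?le0e.
Qed.

Lemma catch_up w s b t0 T q rest :
  on_side s b (zhead (zrun t0 w)) ->
  crossing_seq w b T = crossing_seq w b t0 ++ q :: rest ->
  exists e, [/\ t0 < e <= T, crossing_seq w b e = crossing_seq w b t0 ++ [:: q],
    zstate (zrun e w) = q, zhead (zrun e w) = (if s then b else b - 1)%Z &
    forall p, ~~ on_side s b p -> ztape (zrun e w) p = ztape (zrun t0 w) p].
Proof.
move=> Hs0 EcsT.
have [|e [/andP [le0e leT] Hcse Hcross Hside]] := next_crossing (T := T) Hs0.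
  by rewrite EcsT size_cat addnS ltnS leq_addr.
have Hcse1 : crossing_seq w b e.+1 = crossing_seq w b t0 ++ [:: zstate (zrun e.+1 w)].
  by rewrite crossing_seqS Hcross Hcse.
have Hq : zstate (zrun e.+1 w) = q.
  have /prefixP [s' E] := prefix_crossing_seq w b leT.
  by move: E; rewrite EcsT Hcse1 -catA => /eqP; rewrite eqseq_cat // => /andP [_ /eqP [->]].
have Hse : on_side s b (zhead (zrun e w)) by apply: Hside; rewrite le0e leqnn.
exists e.+1; split => //; first by rewrite ltnS le0e.
- by rewrite Hcse1 Hq.
- apply: (crossed_head Hse); last by rewrite zrunS; apply: zstep_head.
  by move: Hcross; rewrite (crossesE s) Hse; case: (on_side _ _ _).
- by apply: ztape_frozen => [|t]; rewrite ?ltnS; [apply: ltnW | apply: Hside].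
Qed.

Definition agree s b d (c a : zconf) :=
  [/\ zstate c = zstate a, zhead a = (zhead c + d)%Z, on_side s b (zhead c) &
      forall p, on_side s b p -> ztape c p = ztape a (p + d)%Z].

Lemma agree_step s b d c a : agree s b d c a ->
  [/\ zstate (zstep c) = zstate (zstep a), zhead (zstep a) = (zhead (zstep c) + d)%Z &
      forall p, on_side s b p -> ztape (zstep c) p = ztape (zstep a) (p + d)%Z].
Proof.
case=> Hq Hh Hs Ht; rewrite /zstep -Hq; case: (halting (zstate c)) => //.
have -> : ztape a (zhead a) = ztape c (zhead c) by rewrite Hh Ht.
case: (tm_delta _ _ _) => [[q b'] m] /=; split; first by [].
  by rewrite Hh; lia.
move=> p Hp; rewrite /tape_write Hh Ht //.
by case: (Z.eqb_spec p (zhead c)); case: Z.eqb_spec => //; lia.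
Qed.

(* The run [c] on the spliced word is on side [s], where it mirrors the run on [wa] at time
   [ta] (shifted by [da]); on the other side its tape is that of the run on [wb] at time [tb]
   (shifted by [db]), which waits on side [s] for its next crossing. *)
Definition splice_inv s b wa da ta wb db tb (c : zconf) :=
  [/\ agree s b da c (zrun ta wa),
      forall p, ~~ on_side s b p -> ztape c p = ztape (zrun tb wb) (p + db)%Z,
      on_side s (b + db) (zhead (zrun tb wb)) &
      crossing_seq wa (b + da) ta = crossing_seq wb (b + db) tb].

Lemma splice_inv_stay s b wa da ta wb db tb c :
  splice_inv s b wa da ta wb db tb c -> on_side s b (zhead (zstep c)) ->
  splice_inv s b wa da ta.+1 wb db tb (zstep c).
Proof.
move=> [Hag Hpassive Hwait Hcs] Hs'; have [Hq Hh Ht] := agree_step Hag.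
have [_ Hh0 Hs0 _] := Hag; rewrite -zrunS in Hq Hh Ht.
split=> //.
- move=> p Hp; rewrite zstep_tape ?Hpassive // => Ep.
  by move: Hp; rewrite Ep Hs0.
- rewrite crossing_seqS (crossesE s) Hh Hh0 !on_side_shift Hs0 Hs' /=.
  by rewrite cats0.
Qed.

Lemma splice_inv_cross s b wa da ta XA wb db tb XB c :
  splice_inv s b wa da ta wb db tb c -> ~~ on_side s b (zhead (zstep c)) ->
  ta < XA -> crossing_seq wa (b + da) XA = crossing_seq wb (b + db) XB ->
  exists2 e, tb < e <= XB & splice_inv (~~ s) b wb db e wa da ta.+1 (zstep c).
Proof.
move=> [Hag Hpassive Hwait Hcs] Hs' ltaX EcsX.
have [Hq Hh Ht] := agree_step Hag; have [_ Hh0 Hs0 _] := Hag.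
rewrite -zrunS in Hq Hh Ht.
have Hcross : crosses wa (b + da) ta.
  by rewrite (crossesE s) Hh Hh0 !on_side_shift Hs0; case: (on_side s b _) Hs'.
have Hcsa : crossing_seq wa (b + da) ta.+1 =
    crossing_seq wa (b + da) ta ++ [:: zstate (zrun ta.+1 wa)].
  by rewrite crossing_seqS Hcross.
have /prefixP [rest Erest] := prefix_crossing_seq wa (b + da) ltaX.
have [|e [/andP [lt_tb_e leXB] Hcse Hqe Hhe Hfrozen]] :=
  catch_up (T := XB) (q := zstate (zrun ta.+1 wa)) (rest := rest) Hwait.
  by rewrite -EcsX Erest Hcsa -Hcs -catA.
have Hhc : zhead (zstep c) = (if s then b else b - 1)%Z.
  by apply: (crossed_head Hs0 Hs'); apply: zstep_head.
exists e; first by rewrite lt_tb_e.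
split.
- split; first by rewrite Hq Hqe.
  + by rewrite Hhe Hhc; case: (s); lia.
  + by rewrite on_sideN.
  + move=> p; rewrite on_sideN => Hp.
    rewrite zstep_tape; last by move=> Ep; move: Hp; rewrite Ep Hs0.
    by rewrite Hpassive // Hfrozen // on_side_shift.
- by move=> p; rewrite on_sideN negbK => Hp; apply: Ht.
- by rewrite on_sideN Hh on_side_shift.
- by rewrite Hcse Hcsa Hcs.
Qed.

Lemma splice_inv_step s b wa da ta XA wb db tb XB c q :
  halting q -> zstate (zrun XA wa) = q ->
  crossing_seq wa (b + da) XA = crossing_seq wb (b + db) XB ->
  splice_inv s b wa da ta wb db tb c ->
  zstate c = q \/
  ta < XA /\ (splice_inv s b wa da ta.+1 wb db tb (zstep c) \/
              exists2 e, tb < e <= XB & splice_inv (~~ s) b wb db e wa da ta.+1 (zstep c)).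
Proof.
move=> Hq HXA EcsX Hinv; have [[Hqc _ _ _] _ _ _] := Hinv.
case Hhc: (halting (zstate c)).
  by left; rewrite -HXA Hqc; apply: zrun_halting_state; rewrite -?Hqc ?HXA.
right; have ltaX : ta < XA.
  rewrite ltnNge; apply/negP => leXa; move: Hhc.
  by rewrite Hqc -(subnKC leXa) zrun_halted HXA ?Hq.
split=> //; case Hs': (on_side s b (zhead (zstep c))).
- by left; apply: splice_inv_stay.
- by right; apply: splice_inv_cross Hinv _ ltaX EcsX; rewrite Hs'.
Qed.

Lemma splice_inv_init x y b b' :
  0 < b <= size x -> 0 < b' <= size y ->
  splice_inv true (Z.of_nat b) x 0 0 y (Z.of_nat b' - Z.of_nat b) 0
    (zinit (take b x ++ drop b' y)).
Proof.
move=> /andP [b_gt0 le_b_x] /andP [b'_gt0 le_b'_y]; split => //.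
- split => //; first by rewrite /on_side zhead_zinit; apply/eqP/Z.ltb_lt; lia.
  move=> p; rewrite /on_side Z.add_0_r => /eqP /Z.ltb_lt lt_p_b.
  rewrite !ztape_zinit; case: (p <? 0)%Z => //.
  rewrite map_cat nth_cat size_map size_takel // (_ : Z.to_nat p < b); last by lia.
  by rewrite map_take nth_take //; lia.
- move=> p; rewrite /on_side eqb_id => /negbTE /Z.ltb_ge le_b_p.
  rewrite !ztape_zinit (_ : (p <? 0)%Z = false); last by apply/Z.ltb_ge; lia.
  rewrite (_ : (p + _ <? 0)%Z = false); last by apply/Z.ltb_ge; lia.
  rewrite map_cat nth_cat size_map size_takel // ltnNge (_ : b <= Z.to_nat p) /=; last by lia.
  by rewrite map_drop nth_drop; congr nth; lia.
- by rewrite /on_side zhead_zinit; apply/eqP/Z.ltb_lt; lia.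
Qed.

Lemma cut_and_paste x y b b' Tx Ty q :
  0 < b <= size x -> 0 < b' <= size y -> halting q ->
  zstate (zrun Tx x) = q -> zstate (zrun Ty y) = q ->
  crossing_seq x (Z.of_nat b) Tx = crossing_seq y (Z.of_nat b') Ty ->
  exists t, zstate (zrun t (take b x ++ drop b' y)) = q.
Proof.
move=> Hb Hb' Hq HTx HTy Ecs.
set z := take b x ++ drop b' y; set db := (Z.of_nat b' - Z.of_nat b)%Z.
have EcsXY : crossing_seq x (Z.of_nat b + 0) Tx = crossing_seq y (Z.of_nat b + db) Ty.
  by rewrite Z.add_0_r (_ : (Z.of_nat b + db)%Z = Z.of_nat b') //; lia.
(* Every step of the spliced run advances one of the two simulated runs. *)
pose sim t := exists ta tb, [/\ t <= ta + tb, ta <= Tx, tb <= Ty &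
  splice_inv true (Z.of_nat b) x 0 ta y db tb (zrun t z) \/
  splice_inv false (Z.of_nat b) y db tb x 0 ta (zrun t z)].
suff : forall t, (exists t', zstate (zrun t' z) = q) \/ sim t.
  case/(_ (Tx + Ty).+1) => [//|[ta [tb [le_t leTx leTy _]]]].
  by move: le_t; rewrite ltnNge leq_add.
elim=> [|t [Hdone|[ta [tb [le_t leTx leTy [Hinv|Hinv]]]]]].
- by right; exists 0, 0; split => //; left; apply: splice_inv_init.
- by left.
- have [Hqt|[ltaX [Hnext|[e /andP [lt_tb_e le_e] Hnext]]]] :=
    splice_inv_step Hq HTx EcsXY Hinv.
  + by left; exists t.
  + by right; exists ta.+1, tb; rewrite zrunS addSn ltnS; split => //; left.
  + by right; exists ta.+1, e; rewrite zrunS; split => //; [lia | right].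
- have [Hqt|[ltbY [Hnext|[e /andP [lt_ta_e le_e] Hnext]]]] :=
    splice_inv_step Hq HTy (esym EcsXY) Hinv.
  + by left; exists t.
  + by right; exists ta, tb.+1; rewrite zrunS addnS ltnS; split => //; right.
  + by right; exists e, tb.+1; rewrite zrunS; split => //; [lia | left].
Qed.

Lemma decides_cut_and_paste (L : pred (seq Sigma)) T x y b b' :
  tm_acc M != tm_rej M -> decides_in_time M L T -> L x -> L y ->
  0 < b <= size x -> 0 < b' <= size y ->
  crossing_seq x (Z.of_nat b) (T (size x)) = crossing_seq y (Z.of_nat b') (T (size y)) ->
  L (take b x ++ drop b' y).
Proof.
move=> acc_rej Hdec Lx Ly Hb Hb' Ecs.
have Hacc w : L w -> zstate (zrun (T (size w)) w) = tm_acc M.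
  by move=> Lw; rewrite zrun_state Hdec Lw.
have acc_halting : halting (tm_acc M) by rewrite /halting eqxx.
have [t Ht] := cut_and_paste Hb Hb' acc_halting (Hacc x Lx) (Hacc y Ly) Ecs.
case Lz: (L _) => //; case/eqP: acc_rej.
have Hrej : zstate (zrun (T (size (take b x ++ drop b' y))) (take b x ++ drop b' y)) = tm_rej M.
  by rewrite zrun_state Hdec Lz.
rewrite -Ht -Hrej; apply: zrun_halting_state; by rewrite ?Ht ?Hrej /halting eqxx ?orbT.
Qed.

Lemma sum_size_crossing_seq w k (bd : 'I_k -> Z) T :
  injective bd -> \sum_(i < k) size (crossing_seq w (bd i) T) <= T.
Proof.
move=> bd_inj; under eq_bigr => i _ do rewrite size_crossing_seq.
rewrite exchange_big /=.
apply: (@leq_trans (\sum_(t <- iota 0 T) 1)); last by rewrite sum1_size size_iota.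
apply: leq_sum => t _.
rewrite (_ : \sum_(i < k) _ = #|[pred i | crosses w (bd i) t]|).
  apply/card_le1_eqP => i j; rewrite !inE => Hi Hj.
  exact: bd_inj (crosses_unique Hj Hi).
by rewrite -sum1_card [RHS]big_mkcond; apply: eq_bigr => i _; rewrite inE; case: crosses.
Qed.
End ZTape.

Lemma nth_Some_inj (T : Type) (s1 s2 : seq T) :
  (forall i, nth None (map Some s1) i = nth None (map Some s2) i) -> s1 = s2.
Proof.
elim: s1 s2 => [|x s1 IH] [|y s2] E //; try by have := E 0.
have [<-] := E 0; congr cons; apply: IH => i; exact: E i.+1.
Qed.

Lemma card_bounded_seqs (T : finType) (L : nat) (s : seq (seq T)) :
  uniq s -> all (fun l => size l <= L) s -> size s <= expn #|T|.+1 L.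
Proof.
move=> s_uniq s_small.
pose code (l : seq T) : {ffun 'I_L -> option T} := [ffun i : 'I_L => nth None (map Some l) i].
have code_inj : {in s &, injective code}.
  move=> l1 l2 /(allP s_small) le1 /(allP s_small) le2 E; apply: nth_Some_inj => i.
  case: (ltnP i L) => [ltiL|leLi].
    by have := congr1 (fun f : {ffun 'I_L -> option T} => f (Ordinal ltiL)) E; rewrite !ffunE.
  by rewrite !nth_default ?size_map // (leq_trans _ leLi).
have codes_uniq : uniq (map code s) by rewrite map_inj_in_uniq.
have := max_card (mem (map code s)).
by rewrite (card_uniqP codes_uniq) size_map card_ffun card_option card_ord.
Qed.

Lemma sum_size_injective_seqs (I : eqType) (T : finType) (E : seq I) (f : I -> seq T) L :
  uniq E -> {in E &, injective f} ->
  L.+1 * (size E - expn #|T|.+1 L) <= \sum_(g <- E) size (f g).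
Proof.
move=> E_uniq f_inj; pose small g := size (f g) <= L.
have Hsmall : count small E <= expn #|T|.+1 L.
  rewrite -size_filter -(size_map f); apply: card_bounded_seqs.
    rewrite map_inj_in_uniq ?filter_uniq // => g1 g2 /[!mem_filter] /andP [_ g1E] /andP [_ g2E].
    exact: f_inj.
  by apply/allP => l /mapP [g]; rewrite mem_filter => /andP [Hg _] ->.
rewrite (bigID small) /= (leq_trans _ (leq_addl _ _)) //.
apply: (@leq_trans (\sum_(g <- E | ~~ small g) L.+1)); last first.
  by apply: leq_sum => g; rewrite /small -ltnNge.
rewrite big_const_seq iter_addn_0 leq_mul2l leq_subLR -(count_predC small E).
by apply/orP; right; apply: leq_add Hsmall (leqnn _).
Qed.

Lemma take_drop_splice (T : Type) (u u' p v v' : seq T) c : c <= size p ->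
  take (size u + c) (u ++ p ++ v) ++ drop (size u' + c) (u' ++ p ++ v') = u ++ p ++ v'.
Proof.
move=> le_c_p.
have Esize w : size (w ++ take c p) = size w + c by rewrite size_cat size_takel.
have Ecut w x : w ++ p ++ x = (w ++ take c p) ++ (drop c p ++ x).
  by rewrite -catA (catA (take c p)) cat_take_drop.
by rewrite !Ecut take_size_cat ?Esize // drop_size_cat ?Esize // -Ecut.
Qed.

Lemma INR_expn m k : INR (expn m k) = (INR m ^ k)%R.
Proof. by elim: k => [|k IH]; rewrite ?expn0 // expnS mult_INR IH. Qed.

Section LoopWords.
Variables (G : groupType) (Sigma : finType) (ev : Sigma -> G).
Local Open Scope group_scope.

Lemma word_eval_cat u v : word_eval ev (u ++ v) = word_eval ev u * word_eval ev v.
Proof. by elim: u => [|x u IH] /=; rewrite ?mul1g // IH mulgA. Qed.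

Lemma size_words_of_length k w : w \in words_of_length Sigma k -> size w = k.
Proof.
elim: k w => [|k IH] w /=; first by rewrite inE => /eqP ->.
by case/allpairsP => [[x w'] [_ /= Hw' ->]] /=; rewrite (IH _ Hw').
Qed.

Lemma size_words_upto n w : w \in words_upto Sigma n -> (size w <= n)%nat.
Proof.
by case/flatten_mapP => k; rewrite mem_iota add0n ltnS => Hk /size_words_of_length ->.
Qed.

Lemma symmetric_gen_inverse :
  symmetric_gen ev -> exists inv : Sigma -> Sigma, forall s, ev (inv s) = (ev s)^-1.
Proof.
move=> Hsym; exists (fun s => odflt s [pick s' | ev s' == (ev s)^-1]) => s.
case: pickP => [s' /eqP //|Hnone].
by have [s' Es'] := Hsym s; move: (Hnone s'); rewrite Es' eqxx.
Qed.

Lemma exponential_growth_card_gt0 : exponential_growth ev -> (0 < #|Sigma|)%nat.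
Proof.
case=> a [a_gt1 Hgrow]; rewrite lt0n; apply/negP => /eqP Sigma0.
have growth1 : (growth ev 1 <= 1)%nat.
  apply: (@leq_trans (size [:: 1])) => //; apply: uniq_leq_size; first exact: undup_uniq.
  move=> g; rewrite mem_undup => /mapP [[|x w] _ ->]; first by rewrite inE.
  by have := card0_eq Sigma0 x.
have := Hgrow 1%nat; have := le_INR _ _ (elimT leP growth1); rewrite pow_1 /=; lra.
Qed.

Lemma exponential_growth_pow B :
  exponential_growth ev -> exists2 r, (0 < r)%nat & forall L, (expn B L <= growth ev (r * L))%nat.
Proof.
case=> a [a_gt1 Hgrow].
have [N HN] := Pow_x_infinity a ltac:(rewrite Rabs_pos_eq; lra) (INR B).
have HB : (INR B <= a ^ N.+1)%R.
  have := HN N.+1 (Nat.le_succ_diag_r N); rewrite Rabs_pos_eq; [lra | apply: pow_le; lra].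
exists N.+1 => // L; apply/leP/INR_le; rewrite INR_expn.
apply: Rle_trans (Hgrow _); rewrite pow_mult.
by apply: pow_incr; split; [apply: pos_INR | exact: HB].
Qed.

Variable inv : Sigma -> Sigma.
Hypothesis ev_inv : forall s, ev (inv s) = (ev s)^-1.
Variable s0 : Sigma.

Definition inv_word (u : seq Sigma) := rev (map inv u).

Lemma word_eval_inv u : word_eval ev (inv_word u) = (word_eval ev u)^-1.
Proof.
elim: u => [|x u IH]; first by rewrite /= invg1.
by rewrite /inv_word /= rev_cons -cats1 word_eval_cat -/(inv_word u) IH /= mulg1 ev_inv invgM.
Qed.

Lemma size_inv_word u : size (inv_word u) = size u.
Proof. by rewrite size_rev size_map. Qed.

Definition trivial_word n := flatten (nseq n [:: s0; inv s0]).

Lemma word_eval_trivial n : word_eval ev (trivial_word n) = 1.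
Proof. by elim: n => //= n IH; rewrite -/(trivial_word n) IH ev_inv !mulg1 mulgV. Qed.

Lemma size_trivial_word n : size (trivial_word n) = (2 * n)%nat.
Proof. by elim: n => //= n IH; rewrite -/(trivial_word n) IH mulnS. Qed.

Definition ball n := undup [seq word_eval ev w | w <- words_upto Sigma n].

Definition short_word n g := nth [::] (words_upto Sigma n)
  (find (fun w => word_eval ev w == g) (words_upto Sigma n)).

Lemma short_wordP n g : g \in ball n ->
  word_eval ev (short_word n g) = g /\ (size (short_word n g) <= n)%nat.
Proof.
rewrite mem_undup => /mapP [w Hw ->].
have Hhas : has (fun w' => word_eval ev w' == word_eval ev w) (words_upto Sigma n).
  by apply/hasP; exists w.
split; first exact/eqP/(nth_find [::] Hhas).
by apply: size_words_upto; apply: mem_nth; rewrite -has_find.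
Qed.

(* The cut points are the [2 * n] boundaries inside [trivial_word n]: splicing the loop
   words of [g] and [g'] there yields a word for [g * g'^-1]. *)
Definition loop_word n g := short_word n g ++ trivial_word n ++ inv_word (short_word n g).

Lemma word_problem_loop n g : word_problem ev (loop_word n g).
Proof.
by rewrite /word_problem !word_eval_cat word_eval_trivial word_eval_inv mul1g mulgV.
Qed.

Lemma size_loop_word n g :
  size (loop_word n g) = (2 * size (short_word n g) + 2 * n)%nat.
Proof. by rewrite !size_cat size_trivial_word size_inv_word; lia. Qed.

Variables (M : TM Sigma) (T : nat -> nat).
Hypotheses (acc_rej : tm_acc M != tm_rej M)
           (M_decides : decides_in_time M (word_problem ev) T).

Definition loop_crossing n c g :=
  crossing_seq M (loop_word n g) (Z.of_nat (size (short_word n g) + c)) (T (size (loop_word n g))).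

Lemma loop_crossing_inj n c : (0 < c <= 2 * n)%nat -> {in ball n &, injective (loop_crossing n c)}.
Proof.
move=> /andP [c_gt0 le_c_2n] g g' Hg Hg' Ecs.
have [eval_u _] := short_wordP Hg; have [eval_u' _] := short_wordP Hg'.
have Hb h : (0 < size (short_word n h) + c <= size (loop_word n h))%nat.
  by rewrite size_loop_word; lia.
have := decides_cut_and_paste acc_rej M_decides (word_problem_loop n g) (word_problem_loop n g')
  (Hb g) (Hb g') Ecs.
rewrite /loop_word take_drop_splice ?size_trivial_word // /word_problem !word_eval_cat.
by rewrite word_eval_trivial word_eval_inv eval_u eval_u' mul1g mulg_eq1 invgK => /eqP.
Qed.

Lemma loop_words_time n L :
  (2 * n * (L.+1 * (growth ev n - expn #|tm_state M|.+1 L)) <=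
   \sum_(g <- ball n) T (size (loop_word n g)))%nat.
Proof.
apply: (@leq_trans (\sum_(i < 2 * n) \sum_(g <- ball n) size (loop_crossing n i.+1 g))).
  rewrite -[X in (X * _)%nat]card_ord -sum_nat_const; apply: leq_sum => i _.
  apply: sum_size_injective_seqs; first exact: undup_uniq.
  by apply: loop_crossing_inj; rewrite ltn_ord.
rewrite exchange_big /=; apply: leq_sum => g _; rewrite /loop_crossing.
by apply: sum_size_crossing_seq => i j /Nat2Z.inj /addnI [/val_inj].
Qed.
End LoopWords.

Lemma little_o_n2_quarter r T : little_o_n2 T ->
  exists N, forall n s, N <= s -> s <= 4 * n -> r * T s <= n * n.
Proof.
move=> T_small; have [N HN] := T_small (16 * r); exists N => n s le_N_s le_s_4n.
have := HN s le_N_s; rewrite (_ : Nat.pow s 2 = s * s); last by rewrite /=; lia.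
nia.
Qed.

Theorem mainTheorem4 (G : groupType) (Sigma : finType) (ev : Sigma -> G) :
  finite_symmetric_generating_set ev ->
  exponential_growth ev ->
  ~ DTIME1_o_n2 (word_problem ev).
Proof.
move=> [_ [Hsym _]] Hgrow [M [[_ [_ acc_rej]] [T [T_small M_decides]]]].
have [inv ev_inv] := symmetric_gen_inverse Hsym.
have /card_gt0P [s0 _] := exponential_growth_card_gt0 Hgrow.
set K := #|tm_state M|.+1.
have [r r_gt0 Hr] := exponential_growth_pow (2 * K) Hgrow.
have [N HN] := little_o_n2_quarter r T_small.
set L := N.+1; set n := r * L; set X := expn K L; set m := growth ev n.
have le_2X_m : 2 * X <= m.
  by apply: leq_trans (Hr L); rewrite expnMn leq_mul2r (@leq_pexp2l 2 1) ?orbT.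
have HT g : g \in ball ev n -> r * T (size (loop_word ev inv s0 n g)) <= n * n.
  move=> /short_wordP [_ size_u]; apply: HN; rewrite size_loop_word; last by lia.
  by rewrite /n /L; nia.
have Hsum : r * \sum_(g <- ball ev n) T (size (loop_word ev inv s0 n g)) <= m * (n * n).
  apply: (@leq_trans (\sum_(g <- ball ev n) n * n)).
    by rewrite big_distrr /= big_seq [X in _ <= X]big_seq; apply: leq_sum.
  by rewrite big_const_seq count_predT iter_addn_0 mulnC.
have := loop_words_time ev_inv s0 acc_rej M_decides n L.
rewrite -/K -/X -/m => Htime.
have le_m : m <= 2 * (m - X) by lia.
have : r * (2 * n * (L.+1 * (m - X))) <= 2 * (m - X) * (n * n).
  apply: leq_trans (leq_mul (leqnn r) Htime) _; apply: leq_trans Hsum _.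
  by rewrite leq_mul2r le_m orbT.
rewrite {3}/n (_ : r * _ = 2 * n * (m - X) * r * L.+1); last by nia.
rewrite (_ : _ * (n * _) = 2 * n * (m - X) * r * L); last by nia.
by rewrite leq_pmul2l ?ltnn // !muln_gt0 r_gt0 /n /L; lia.
Qed.
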